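(* Let $\Gamma=(V,E)$ be a connected locally finite graph with root $o$, let $\lambda\ge1$, and let $(Z_n)$ be the $\lambda$-homesick random walk on $(\Gamma,o)$. Let $\tau_o^+=\inf\{n\ge1:Z_n=o\}$. Then for every integer $r\ge1$, \[\Pr\Big(\max_{i<\tau_o^+}\mathrm{dist}(o,Z_i)\ge r\Big)\le\frac{1}{\deg o}\left(\sum_{i=0}^{r-1}|\partial_E B_i|^{-1}\lambda^i\right)^{-1}.\]
   Context: The $\lambda$-homesick random walk on $(\Gamma,o)$: $Z_0=o$; from a vertex $v$, letting $v_1,\dots,v_j$ be the neighbors of $v$ with $\mathrm{dist}(o,v_i)=\mathrm{dist}(o,v)-1$ and $v'_1,\dots,v'_k$ the other neighbors, the walk moves to each $v_i$ with probability $\frac{\lambda}{\lambda j+k}$ and to each $v'_i$ with probability $\frac{1}{\lambda j+k}$. $B_r=\{v\in V:\mathrm{dist}(o,v)\le r\}$, and $\partial_E A=\{(u,v)\in E:u\in A,v\notin A\}$ is the edge boundary. The maximum over $i<\tau_o^+$ is over all $i$ if $\tau_o^+=\infty$. *)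

From HB Require Import structures.
From mathcomp Require Import all_boot all_order all_algebra.
From mathcomp Require Import all_classical all_reals ereal esum.
Set Implicit Arguments. Unset Strict Implicit. Unset Printing Implicit Defensive.
Import Order.TTheory GRing.Theory Num.Theory.
Local Open Scope ring_scope.

(* A locally finite graph on a vertex type V is given by its neighbour lists
   nb : V -> seq V (hypotheses of simplicity/symmetry are in the theorem).
   o is the root. *)
Section Graph.
Variables (V : choiceType) (nb : V -> seq V) (o : V).

Definition adj (x y : V) : bool := y \in nb x.

Fixpoint ballseq (n : nat) : seq V :=
  match n with
  | 0 => [:: o]
  | n.+1 => let b := ballseq n in undup (b ++ flatten (map nb b))
  end.

(* Graph distance from o: the least n such that v is in the ball of radius n
   (0 if v is not reachable; never happens under connectedness). *)
Definition dist (v : V) : nat :=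
  match pselect (exists n, v \in ballseq n) with
  | left H => ex_minn H
  | right _ => 0
  end.

Definition edge_boundary (i : nat) : nat :=
  \sum_(u <- ballseq i) count (fun v => (i < dist v)%N) (nb u).

Variable (R : realType) (lam : R).

Definition hs_p (v u : V) : R :=
  let j := count (fun w => (dist w < dist v)%N) (nb v) in
  let k := (size (nb v) - j)%N in
  if u \in nb v then
    (if (dist u < dist v)%N then lam else 1) / (lam * j%:R + k%:R)
  else 0.

Fixpoint path_prob (x : V) (s : seq V) : R :=
  match s with
  | [::] => 1
  | y :: s' => hs_p x y * path_prob y s'
  end.

(* s = [z_1; ...; z_k] is a minimal walk prefix from Z_0 = o realising the
   event {max_{i < tau_o^+} dist(o, Z_i) >= r}: none of z_1..z_k is o,
   dist < r before step k, dist >= r at step k. *)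
Definition first_hit (r : nat) (s : seq V) : bool :=
  [&& s != [::], path adj o s, all (fun z => z != o) s,
      all (fun z => (dist z < r)%N) (belast o s) & (r <= dist (last o s))%N].

(* Pr( max_{i < tau_o^+} dist(o, Z_i) >= r ) as the (countable) sum of the
   probabilities of the disjoint cylinder events given by minimal prefixes. *)
Definition escape_prob (r : nat) : \bar R :=
  \esum_(s in [set s : seq V | first_hit r s]) (path_prob o s)%:E.

End Graph.

From HB Require Import structures.
From mathcomp Require Import all_boot all_order all_algebra.
From mathcomp Require Import all_classical all_reals ereal esum.
From mathcomp Require Import topology normedtype sequences.
From mathcomp Require Import ring lra.
Import Order.TTheory GRing.Theory Num.Theory numFieldNormedType.Exports.
Local Open Scope classical_set_scope.
Local Open Scope ring_scope.
Set Implicit Arguments. Unset Strict Implicit. Unset Printing Implicit Defensive.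

(* Let g(v) be the probability that the walk started at v reaches distance r
   before visiting o; it is the increasing limit of the probabilities of doing
   so within n steps, and the escape probability from o is at most g(o).
   Extend g by 0 at o and by 1 at distance >= r, and read it as a voltage in
   the electrical network with conductance lam^-min(d u, d v) on the edge uv:
   the homesick transition probabilities are the conductance-weighted ones,
   so the voltage is harmonic at every other vertex of B_(r-1).  Hence the
   current I = deg(o) g(o) leaving o crosses every cut dB_i, whose edges all
   have conductance lam^-i, and Cauchy-Schwarz gives
   I^2 <= |dB_i| lam^-i E_i, with E_i the energy dissipated on dB_i.  The
   total energy is at most I (the voltage drop is 1), so summing over i < r
   yields I * \sum_i lam^i / |dB_i| <= 1. *)

Lemma sqr_sum_le_size (R : realFieldType) (T : Type) (s : seq T) (F : T -> R) :
  (\sum_(x <- s) F x) ^+ 2 <= (size s)%:R * \sum_(x <- s) F x ^+ 2.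
Proof.
set n : R := (size s)%:R; set S := \sum_(x <- s) F x.
set Q := \sum_(x <- s) F x ^+ 2.
have sum_const (c : R) : \sum_(x <- s) c = n * c.
  by rewrite big_const_seq count_predT iter_addr_0 mulr_natl.
have inner x : \sum_(y <- s) (F x - F y) ^+ 2 = n * F x ^+ 2 + Q - 2 * F x * S.
  rewrite (eq_bigr (fun y => F x ^+ 2 + F y ^+ 2 - 2 * F x * F y)); last first.
    by move=> y _; ring.
  by rewrite sumrB big_split /= sum_const mulr_sumr.
have : 0 <= \sum_(x <- s) \sum_(y <- s) (F x - F y) ^+ 2.
  by apply: sumr_ge0 => x _; apply: sumr_ge0 => y _; apply: sqr_ge0.
under eq_bigr do rewrite inner.
rewrite sumrB big_split /= sum_const -mulr_sumr -mulr_suml -mulr_sumr -/Q -/S.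
nra.
Qed.

Lemma sum_if_count (R : pzSemiRingType) (T : Type) (P : pred T) (s : seq T)
    (a b : R) :
  \sum_(x <- s) (if P x then a else b) = a *+ count P s + b *+ count (predC P) s.
Proof.
rewrite (bigID P) /= (eq_bigr (fun=> a)) => [|x -> //].
rewrite [X in _ + X](eq_bigr (fun=> b)) => [|x /negPf -> //].
by rewrite !big_const_seq !iter_addr_0.
Qed.

Lemma sum_partition_by (M : nmodType) (I : eqType) (K : eqType) (ks : seq K)
    (key : I -> K) (F : seq I) (f : I -> M) :
  uniq ks -> all (fun i => key i \in ks) F ->
  \sum_(i <- F) f i = \sum_(k <- ks) \sum_(i <- F | key i == k) f i.
Proof.
move=> uks /allP keysF; under [RHS]eq_bigr do rewrite big_mkcond.
rewrite exchange_big; apply: eq_big_seq => i /keysF ki /=.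
rewrite (bigD1_seq (key i)) //= eqxx big1 ?addr0 // => k.
by rewrite eq_sym => /negbTE ->.
Qed.

Section EdgeSums.
Variables (V : eqType) (nb : V -> seq V) (R : numDomainType).
Hypothesis nb_uniq : forall x, uniq (nb x).
Hypothesis nb_sym : forall x y, y \in nb x -> x \in nb y.
Variable L : seq V.
Hypothesis L_uniq : uniq L.

Local Notation within K := (\sum_(v <- L) \sum_(u <- nb v | u \in L) K v u).

Lemma sum_within_swap (K : V -> V -> R) :
  within K = within (fun v u => K u v).
Proof.
have as_full_sum (H : V -> V -> R) v : \sum_(u <- nb v | u \in L) H v u =
    \sum_(u <- L) (if u \in nb v then H v u else 0).
  rewrite -big_mkcond -[LHS]big_filter -[RHS]big_filter; apply: perm_big.
  by apply: uniq_perm; rewrite ?filter_uniq // => u; rewrite !mem_filter andbC.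
under eq_bigr do rewrite as_full_sum.
under [RHS]eq_bigr do rewrite (as_full_sum (fun v u => K u v)).
rewrite exchange_big; apply: eq_bigr => v _; apply: eq_bigr => u _.
by have -> : (v \in nb u) = (u \in nb v) by apply/idP/idP => /nb_sym.
Qed.

Lemma sum_within_antisym (K : V -> V -> R) :
  (forall v u, K u v = - K v u) -> within K = 0.
Proof.
move=> Kanti; have within_opp : within K = - within K.
  rewrite {1}sum_within_swap -sumrN; apply: eq_bigr => v _.
  by rewrite -sumrN; apply: eq_bigr => u _; rewrite Kanti.
by apply/eqP; move: (mulrn_eq0 (within K) 2); rewrite mulr2n {1}within_opp addNr eqxx.
Qed.

Lemma sum_within_oriented_le (ord : rel V) (K : V -> V -> R) :
  (forall v u, ord v u -> ~~ ord u v) -> (forall v u, 0 <= K v u + K u v) ->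
  within (fun v u => if ord v u then K v u + K u v else 0) <= within K.
Proof.
move=> ord_asym K_ge0; rewrite -(ler_pMn2r (ltn0Sn 1)) !mulr2n.
rewrite {2}sum_within_swap [X in _ <= X + _]sum_within_swap -!big_split /=.
apply: ler_sum => v _; rewrite -!big_split; apply: ler_sum => u _ /=.
case ord_vu: (ord v u); first by rewrite (negbTE (ord_asym _ _ ord_vu)) addr0 addrC.
by case: (ord u v); rewrite add0r ?K_ge0.
Qed.

End EdgeSums.

Section HomesickWalk.
Variables (V : choiceType) (nb : V -> seq V) (o : V).
Local Notation ball := (ballseq nb o).
Local Notation d := (dist nb o).

Lemma ballseq_uniq n : uniq (ball n).
Proof. by case: n => [|n] //=; rewrite undup_uniq. Qed.

Lemma ballseq_nb n x y : x \in ball n -> y \in nb x -> y \in ball n.+1.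
Proof.
move=> hx hy /=; rewrite mem_undup mem_cat; apply/orP; right.
by apply/flattenP; exists (nb x) => //; apply: map_f.
Qed.

Lemma ballseq_mono m n : (m <= n)%N -> {subset ball m <= ball n}.
Proof.
move=> /subnK <-; elim: (n - m)%N => [|k IH] // x /IH hx.
by rewrite addSn /= mem_undup mem_cat hx.
Qed.

Definition cut_edges i : seq (V * V) :=
  [seq (v, u) | v <- ball i, u <- [seq u <- nb v | (i < d u)%N]].

Lemma size_cut_edges i : size (cut_edges i) = edge_boundary nb o i.
Proof.
rewrite size_allpairs_dep sumnE big_map; apply: eq_bigr => v _.
by rewrite size_filter.
Qed.

Lemma big_cut_edges (M : nmodType) i (F : V -> V -> M) :
  \sum_(e <- cut_edges i) F e.1 e.2 =
  \sum_(v <- ball i) \sum_(u <- nb v | (i < d u)%N) F v u.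
Proof. by rewrite big_allpairs_dep; apply: eq_bigr => v _; rewrite big_filter. Qed.

Hypothesis connected : forall v, exists s, path (adj nb) o s /\ last o s = v.

Lemma ballseq_exhaust v : exists n, v \in ball n.
Proof.
have [s [os <-]] := connected v.
elim/last_ind: s os => [|s y IH]; first by exists 0%N; rewrite /= inE.
rewrite rcons_path last_rcons => /andP [os sy]; have [n sn] := IH os.
by exists n.+1; apply: ballseq_nb sn sy.
Qed.

Lemma mem_ballseq n v : (v \in ball n) = (d v <= n)%N.
Proof.
rewrite /dist; case: pselect => [ex|nex]; last by case: nex; apply: ballseq_exhaust.
case: ex_minnP => m vm min_m; apply/idP/idP; first exact: min_m.
by move/ballseq_mono; apply.
Qed.

Lemma dist_root : d o = 0%N.
Proof. by apply/eqP; rewrite -leqn0 -mem_ballseq /= inE. Qed.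

Lemma dist_nb x y : y \in nb x -> (d y <= (d x).+1)%N.
Proof.
by move=> xy; rewrite -mem_ballseq; apply: ballseq_nb xy; rewrite mem_ballseq.
Qed.

Lemma dist_cut_edge i v u :
  (d v <= i)%N -> u \in nb v -> (i < d u)%N -> d v = i.
Proof.
by move=> vi uv iu; apply/eqP; rewrite eqn_leq vi -ltnS (leq_trans iu (dist_nb uv)).
Qed.

Lemma cut_edges_crossed i x s : path (adj nb) x s ->
  (d x <= i)%N -> (i < d (last x s))%N -> cut_edges i != [::].
Proof.
elim: s x => [|y s IH] x /=; first by move=> _ /leq_ltn_trans h /h; rewrite ltnn.
move=> /andP [xy ys] dx dlast; case: (ltnP i (d y)) => [dy|dy]; last exact: IH ys dy dlast.
have : (x, y) \in cut_edges i.
  by apply: allpairs_f_dep; rewrite ?mem_filter ?dy ?mem_ballseq.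
by case: (cut_edges i).
Qed.

Variables (R : realType) (lam : R) (r : nat).
Hypothesis nb_uniq : forall x, uniq (nb x).
Hypothesis nb_sym : forall x y, y \in nb x -> x \in nb y.
Hypothesis lam_ge1 : 1 <= lam.
Hypothesis r_gt0 : (0 < r)%N.

Local Notation p := (hs_p nb o lam).
Local Notation path_prob := (path_prob nb o lam).

Lemma lam_gt0 : 0 < lam.
Proof. exact: lt_le_trans ltr01 lam_ge1. Qed.

Lemma dist_nb_sym x y : y \in nb x -> (d x <= (d y).+1)%N.
Proof. by move/nb_sym; apply: dist_nb. Qed.

Definition hs_weight v u : R := if (d u < d v)%N then lam else 1.
Definition hs_mass v : R := \sum_(u <- nb v) hs_weight v u.

Lemma hs_weight_ge1 v u : 1 <= hs_weight v u.
Proof. by rewrite /hs_weight; case: ifP. Qed.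

Lemma hs_mass_gt0 v : nb v != [::] -> 0 < hs_mass v.
Proof.
rewrite /hs_mass; case: (nb v) => [|u s] // _; rewrite big_cons.
apply: lt_le_trans ltr01 _; rewrite -[1]addr0; apply: lerD (hs_weight_ge1 v u) _.
by apply: sumr_ge0 => w _; apply: le_trans ler01 (hs_weight_ge1 v w).
Qed.

Lemma hs_pE v u : u \in nb v -> p v u = hs_weight v u / hs_mass v.
Proof.
move=> uv; rewrite /hs_p uv /hs_mass /hs_weight sum_if_count mulr_natr.
by rewrite -[X in (X - _)%N](count_predC (fun w => d w < d v)%N) addKn.
Qed.

Lemma hs_p_ge0 v u : 0 <= p v u.
Proof.
case: (boolP (u \in nb v)) => [uv|]; last by rewrite /hs_p => /negbTE ->.
rewrite hs_pE // divr_ge0 ?(le_trans ler01 (hs_weight_ge1 v u)) //.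
by apply: sumr_ge0 => w _; apply: le_trans ler01 (hs_weight_ge1 v w).
Qed.

Lemma sum_hs_p_le1 v : \sum_(u <- nb v) p v u <= 1.
Proof.
rewrite (eq_big_seq (fun u => hs_weight v u / hs_mass v)) => [|u]; last exact: hs_pE.
rewrite -mulr_suml; have [->|/eqP nb_nil] := eqVneq (nb v) [::].
  by rewrite big_nil mul0r.
by rewrite mulfV // gt_eqF // hs_mass_gt0 //; apply/eqP.
Qed.

Definition absorb (f : V -> R) u : R :=
  if u == o then 0 else if (r <= d u)%N then 1 else f u.

Lemma absorb_le f g u : (forall v, f v <= g v) -> absorb f u <= absorb g u.
Proof. by move=> fg; rewrite /absorb; case: eqP => // _; case: ifP. Qed.

Lemma absorb_bounds f u : (forall v, 0 <= f v <= 1) -> 0 <= absorb f u <= 1.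
Proof.
move=> f01; rewrite /absorb; case: eqP => _; first by rewrite lexx ler01.
by case: ifP; rewrite ?lexx ?ler01.
Qed.

Fixpoint escape_within n v : R :=
  if n is n'.+1 then \sum_(u <- nb v) p v u * absorb (escape_within n') u else 0.

Definition escape_fun v : R := limn (fun n => escape_within n v).

Lemma escape_within_bounds n v : 0 <= escape_within n v <= 1.
Proof.
elim: n v => [|n IH] v /=; first by rewrite lexx ler01.
have E_ge0 u : 0 <= absorb (escape_within n) u by case/andP: (absorb_bounds u IH).
have E_le1 u : absorb (escape_within n) u <= 1 by case/andP: (absorb_bounds u IH).
apply/andP; split; first by apply: sumr_ge0 => u _; rewrite mulr_ge0 ?hs_p_ge0.
apply: le_trans (sum_hs_p_le1 v); apply: ler_sum => u _.
by rewrite ler_piMr ?hs_p_ge0.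
Qed.

Lemma escape_within_homo v :
  {homo (fun n => escape_within n v) : m n / (m <= n)%N >-> m <= n}.
Proof.
apply/nondecreasing_seqP => n; elim: n v => [|n IH] v.
  by case/andP: (escape_within_bounds 1 v).
apply: ler_sum => u _; apply: (ler_wpM2l (hs_p_ge0 v u)).
exact: absorb_le.
Qed.

Lemma escape_within_cvg v : (fun n => escape_within n v) @ \oo --> escape_fun v.
Proof.
apply: nondecreasing_is_cvgn; first exact: escape_within_homo.
by exists 1 => _ [n _ <-]; case/andP: (escape_within_bounds n v).
Qed.

Lemma escape_within_le_fun v n : escape_within n v <= escape_fun v.
Proof.
exact: (nondecreasing_cvgn_le (escape_within_homo v) (cvgP _ (@escape_within_cvg v)) n).
Qed.

Lemma escape_fun_fixpoint v :
  escape_fun v = \sum_(u <- nb v) p v u * absorb escape_fun u.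
Proof.
have shifted : (fun n => escape_within n.+1 v) @ \oo --> escape_fun v.
  by have := @escape_within_cvg v; rewrite -cvg_shiftS.
have sum_cvg : (fun n => escape_within n.+1 v) @ \oo -->
    \sum_(u <- nb v) p v u * absorb escape_fun u.
  apply: cvg_big => [|u _]; first exact: add_continuous.
  apply: cvgM; first exact: cvg_cst.
  rewrite /absorb; case: eqP => _; first exact: cvg_cst.
  by case: ifP => _; [exact: cvg_cst | exact: escape_within_cvg].
by rewrite -(cvg_lim (@Rhausdorff R) shifted) -(cvg_lim (@Rhausdorff R) sum_cvg).
Qed.

Definition first_hit_from v (s : seq V) : bool :=
  [&& s != [::], path (adj nb) v s, all (fun z => z != o) s,
      all (fun z => (d z < r)%N) (belast v s) & (r <= d (last v s))%N].

Lemma first_hit_from_nil v : first_hit_from v [::] = false.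
Proof. by []. Qed.

Lemma first_hit_from_cons v u s :
  first_hit_from v (u :: s) =
  [&& (d v < r)%N, u \in nb v, u != o &
      if s is [::] then (r <= d u)%N else first_hit_from u s].
Proof.
rewrite /first_hit_from /adj /=.
by case: s => [|w s]; case: (u \in nb v); case: (u != o); case: (d v < r)%N;
  rewrite /= ?andbF.
Qed.

Definition tails_via u (F : seq (seq V)) : seq (seq V) :=
  [seq behead s | s <- F & head o s == u].

Lemma first_hit_tails v u (F : seq (seq V)) :
  uniq F -> all (first_hit_from v) F ->
  [/\ uniq (tails_via u F),
      all (fun t => first_hit_from v (u :: t)) (tails_via u F)
    & \sum_(s <- F | head o s == u) path_prob v s =
      p v u * \sum_(t <- tails_via u F) path_prob u t].
Proof.
move=> uF /allP hitF.
have consF s : s \in F -> head o s = u -> s = u :: behead s.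
  by case: s => [/hitF|w s _ <-] //; rewrite first_hit_from_nil.
split.
- rewrite map_inj_in_uniq ?filter_uniq // => s1 s2 /[!mem_filter].
  move=> /andP [/eqP s1u s1F] /andP [/eqP s2u s2F] eq_tail.
  by rewrite (consF s1) // (consF s2) // eq_tail.
- apply/allP => _ /mapP [s /[!mem_filter] /andP [/eqP su sF] ->].
  by rewrite -consF //; apply: hitF.
- rewrite big_map big_filter mulr_sumr big_seq_cond [RHS]big_seq_cond.
  apply: eq_bigr => -[|w s] /andP [/hitF]; first by rewrite first_hit_from_nil.
  by move=> _ /eqP /= ->.
Qed.

Lemma sum_tails_le N v u (T : seq (seq V)) :
  (forall F, uniq F -> all (first_hit_from u) F ->
     all (fun s => size s <= N)%N F ->
     \sum_(s <- F) path_prob u s <= escape_within N u) ->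
  uniq T -> all (fun t => first_hit_from v (u :: t)) T ->
  all (fun t => size t <= N)%N T ->
  \sum_(t <- T) path_prob u t <= absorb (escape_within N) u.
Proof.
move=> IH uT /allP hitT sizeT; rewrite /absorb.
have [uo|uo] := eqVneq u o.
  rewrite big1_seq // => t /andP [_ /hitT].
  by rewrite first_hit_from_cons uo eqxx !andbF.
case: ifP => far.
  have not_near : (d u < r)%N = false by rewrite ltnNge far.
  have nilT : {subset T <= [:: [::]]}.
    move=> [|w t] /hitT; rewrite ?inE // first_hit_from_cons.
    by rewrite /first_hit_from /= not_near !andbF.
  rewrite (eq_big_seq (fun=> 1)) => [|t /nilT]; last by rewrite inE => /eqP ->.
  by rewrite big_const_seq count_predT iter_addr_0 lern1 (uniq_leq_size uT nilT).
apply: IH => //; apply/allP => -[|w t] /hitT.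
  by rewrite first_hit_from_cons far !andbF.
by rewrite first_hit_from_cons => /and4P [].
Qed.

Lemma sum_first_hits_le N v (F : seq (seq V)) :
  uniq F -> all (first_hit_from v) F -> all (fun s => size s <= N)%N F ->
  \sum_(s <- F) path_prob v s <= escape_within N v.
Proof.
elim: N v F => [|N IH] v F uF hitF sizeF.
  case: F hitF sizeF {uF} => [|s F /allP hitF /allP sizeF]; first by rewrite big_nil.
  by case: s hitF sizeF => [/(_ _ (mem_head _ _))|x s _ /(_ _ (mem_head _ _))].
have headF : all (fun s => head o s \in nb v) F.
  apply/allP => -[|u s] /(allP hitF); first by rewrite first_hit_from_nil.
  by rewrite first_hit_from_cons => /and4P [].
rewrite (sum_partition_by (path_prob v) (nb_uniq v) headF).
apply: ler_sum => u uv; have [uT hitT ->] := first_hit_tails u uF hitF.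
apply: (ler_wpM2l (hs_p_ge0 v u)); apply: sum_tails_le (IH u) uT hitT _.
apply/allP => _ /mapP [s /[!mem_filter] /andP [_ /(allP sizeF) size_s] ->].
by case: s size_s.
Qed.

Lemma escape_prob_le_escape_fun : (escape_prob nb o lam r <= (escape_fun o)%:E)%E.
Proof.
rewrite /escape_prob /esum; apply: ge_ereal_sup => /= _ [X [finX XF] <-].
rewrite fsbig_finite // sumEFin lee_fin.
set L := finmap.enum_fset (fset_set X).
apply: le_trans (escape_within_le_fun o (\max_(s <- L) size s)).
apply: sum_first_hits_le; first exact: finmap.fset_uniq.
  apply/allP => s sL; have : s \in X by rewrite -(in_fset_set finX).
  by rewrite inE => /XF.
by apply/allP => s sL; apply: leq_bigmax_seq.
Qed.

Lemma escape_prob_cut0 i : (i < r)%N -> edge_boundary nb o i = 0%N ->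
  escape_prob nb o lam r = 0%E.
Proof.
move=> ir cut0; rewrite /escape_prob (_ : [set s | _] = set0) ?esum_set0 //.
apply/seteqP; split => // s /= /and5P [_ os _ _ far].
have := cut_edges_crossed os _ (leq_trans ir far).
by rewrite dist_root -size_eq0 size_cut_edges cut0 => /(_ isT).
Qed.

Definition conductance v u : R := lam^-1 ^+ minn (d v) (d u).
Definition voltage : V -> R := absorb escape_fun.
Definition flow v u : R := conductance v u * (voltage u - voltage v).
Definition net_flow v : R := \sum_(u <- nb v) flow v u.
Definition energy v u : R := conductance v u * (voltage u - voltage v) ^+ 2.

Lemma conductanceC v u : conductance v u = conductance u v.
Proof. by rewrite /conductance minnC. Qed.

Lemma conductance_lt v u : (d v < d u)%N -> conductance v u = lam^-1 ^+ d v.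
Proof. by move=> /ltnW vu; rewrite /conductance (minn_idPl vu). Qed.

Lemma conductance_nb v u : u \in nb v ->
  conductance v u = lam^-1 ^+ d v * hs_weight v u.
Proof.
move=> uv; rewrite /conductance /hs_weight.
case: (ltnP (d u) (d v)) => [uv_lt|vu]; last by rewrite mulr1.
have -> : d v = (d u).+1 by apply/eqP; rewrite eqn_leq dist_nb_sym.
by rewrite exprS mulrAC mulVf ?mul1r // gt_eqF ?lam_gt0.
Qed.

Lemma voltage_root : voltage o = 0.
Proof. by rewrite /voltage /absorb eqxx. Qed.

Lemma voltage_far u : (r <= d u)%N -> voltage u = 1.
Proof.
move=> far; rewrite /voltage /absorb far; case: eqP => // uo.
by move: far r_gt0; rewrite uo dist_root leqn0 => /eqP ->.
Qed.

Lemma energy_ge0 v u : 0 <= energy v u.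
Proof. by rewrite mulr_ge0 ?sqr_ge0 ?exprn_ge0 // invr_ge0 ltW ?lam_gt0. Qed.

Lemma net_flow_harmonic v : v != o -> (d v < r)%N -> net_flow v = 0.
Proof.
move=> vo near; have [nb_nil|nb_cons] := eqVneq (nb v) [::].
  by rewrite /net_flow nb_nil big_nil.
have voltage_v : voltage v * hs_mass v = \sum_(u <- nb v) hs_weight v u * voltage u.
  rewrite /voltage {1}/absorb (negbTE vo) leqNgt near /= escape_fun_fixpoint.
  rewrite mulr_suml; apply: eq_big_seq => u uv.
  by rewrite hs_pE // mulrAC divfK // gt_eqF ?hs_mass_gt0.
rewrite /net_flow (eq_big_seq (fun u => lam^-1 ^+ d v *
    (hs_weight v u * voltage u - hs_weight v u * voltage v))); last first.
  by move=> u uv; rewrite /flow conductance_nb // -mulrA mulrBr.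
rewrite -mulr_sumr sumrB -mulr_suml -voltage_v -/(hs_mass v).
by rewrite [hs_mass v * _]mulrC subrr ?mul0r ?mulr0.
Qed.

Lemma escape_fun_root : escape_fun o = (size (nb o))%:R^-1 * net_flow o.
Proof.
have weight_o u : hs_weight o u = 1 by rewrite /hs_weight dist_root.
have mass_o : hs_mass o = (size (nb o))%:R.
  rewrite /hs_mass (eq_bigr _ (fun u _ => weight_o u)).
  by rewrite big_const_seq count_predT iter_addr_0.
rewrite escape_fun_fixpoint mulr_sumr; apply: eq_big_seq => u ou.
rewrite hs_pE // weight_o mass_o mul1r /flow /conductance dist_root min0n expr0.
by rewrite mul1r voltage_root subr0.
Qed.

Lemma net_flow_through_cut i : (i < r)%N ->
  \sum_(e <- cut_edges i) flow e.1 e.2 = net_flow o.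
Proof.
move=> ir; have sum_net_flow : \sum_(v <- ball i) net_flow v = net_flow o.
  rewrite (bigD1_seq o) ?ballseq_uniq ?mem_ballseq ?dist_root //=.
  rewrite big1_seq ?addr0 // => v /andP [vo]; rewrite mem_ballseq => vi.
  by apply: net_flow_harmonic => //; apply: leq_ltn_trans vi ir.
have inner : \sum_(v <- ball i) \sum_(u <- nb v | u \in ball i) flow v u = 0.
  apply: sum_within_antisym => // [|v u]; first exact: ballseq_uniq.
  by rewrite /flow conductanceC -mulrN opprB.
have split_inner v : net_flow v = \sum_(u <- nb v | u \in ball i) flow v u +
    \sum_(u <- nb v | (i < d u)%N) flow v u.
  rewrite /net_flow (bigID (fun u => u \in ball i)) /=; congr (_ + _).
  by apply: eq_bigl => u; rewrite mem_ballseq ltnNge.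
by rewrite -sum_net_flow big_cut_edges (eq_bigr _ (fun v _ => split_inner v))
  big_split /= inner add0r.
Qed.

Lemma mem_inner_ball v : (v \in ball r.-1) = (d v < r)%N.
Proof. by rewrite mem_ballseq -ltnS prednK. Qed.

Lemma sum_cut_levels (F : V -> V -> R) :
  \sum_(i < r) \sum_(e <- cut_edges i) F e.1 e.2 =
  \sum_(v <- ball r.-1) \sum_(u <- nb v | (d v < d u)%N) F v u.
Proof.
have level i : (i < r)%N -> \sum_(e <- cut_edges i) F e.1 e.2 =
    \sum_(v <- ball r.-1 | d v == i) \sum_(u <- nb v | (d v < d u)%N) F v u.
  move=> ir; rewrite big_cut_edges (bigID (fun v => d v == i)) /=.
  rewrite [X in _ + X]big1_seq ?addr0 => [|v /andP [vi]]; last first.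
    rewrite mem_ballseq => v_le_i; apply: big1_seq => u /andP [iu uv].
    by rewrite (dist_cut_edge v_le_i uv iu) eqxx in vi.
  rewrite -big_filter -[RHS]big_filter.
  rewrite (perm_big [seq v <- ball r.-1 | d v == i]); last first.
    apply: uniq_perm; rewrite ?filter_uniq ?ballseq_uniq // => v.
    rewrite !mem_filter mem_inner_ball mem_ballseq.
    by case: eqP => // ->; rewrite leqnn.
  by apply: eq_big_seq => v; rewrite mem_filter => /andP [/eqP ->].
rewrite (eq_bigr _ (fun (i : 'I_r) _ => level i (ltn_ord i))).
under eq_bigr do rewrite big_mkcond.
rewrite exchange_big; apply: eq_big_seq => v; rewrite mem_inner_ball => vr /=.
by rewrite -big_mkcond (big_pred1 (Ordinal vr)) // => i; rewrite eq_sym.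
Qed.

Lemma energy_split v u :
  energy v u = - (voltage v * flow v u) - voltage u * flow u v.
Proof. by rewrite /energy /flow conductanceC; ring. Qed.

Lemma energy_far v u : (r <= d u)%N ->
  energy v u = flow v u - voltage v * flow v u.
Proof. by move=> /voltage_far Vu; rewrite /energy /flow Vu; ring. Qed.

Lemma voltage_net_flow v : (d v < r)%N -> voltage v * net_flow v = 0.
Proof.
have [->|vo] := eqVneq v o; first by rewrite voltage_root mul0r.
by move=> near; rewrite net_flow_harmonic ?mulr0.
Qed.

Lemma energy_le_net_flow :
  \sum_(v <- ball r.-1) \sum_(u <- nb v | (d v < d u)%N) energy v u <= net_flow o.
Proof.
set L := ball r.-1.
have far_out u : (u \notin L) = (r.-1 < d u)%N by rewrite mem_ballseq ltnNge.
set Vin := \sum_(v <- L) \sum_(u <- nb v | u \in L) voltage v * flow v u.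
set Vout := \sum_(v <- L) \sum_(u <- nb v | u \notin L) voltage v * flow v u.
have balance : Vin + Vout = 0.
  rewrite -big_split; apply: big1_seq => v /andP [_]; rewrite mem_inner_ball.
  move=> /voltage_net_flow; rewrite /net_flow (bigID (mem L)) /= mulrDr !mulr_sumr.
  exact.
have inner : \sum_(v <- L) \sum_(u <- nb v | u \in L)
    (if (d v < d u)%N then energy v u else 0) <= - Vin.
  rewrite -sumrN; under [X in _ <= X]eq_bigr do rewrite -sumrN.
  under [X in X <= _]eq_bigr => v _ do under eq_bigr => u _ do rewrite energy_split.
  apply: sum_within_oriented_le => // [|v u|v u]; first exact: ballseq_uniq.
    by move=> vu; rewrite -leqNgt ltnW.
  by rewrite -energy_split energy_ge0.
have outer : \sum_(v <- L) \sum_(u <- nb v | u \notin L) energy v u =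
    net_flow o - Vout.
  have last_cut : (r.-1 < r)%N by rewrite ltn_predL.
  rewrite -(net_flow_through_cut last_cut) big_cut_edges -sumrB.
  apply: eq_bigr => v _; rewrite [X in X - _](eq_bigl (mem [predC L])).
    rewrite -sumrB; apply: eq_bigr => u; rewrite far_out -ltnS prednK //.
    exact: energy_far.
  by move=> u; rewrite !inE far_out.
have split : \sum_(v <- L) \sum_(u <- nb v | (d v < d u)%N) energy v u =
    \sum_(v <- L) \sum_(u <- nb v | u \in L)
      (if (d v < d u)%N then energy v u else 0) +
    \sum_(v <- L) \sum_(u <- nb v | u \notin L) energy v u.
  rewrite -big_split; apply: eq_big_seq => v vL /=.
  rewrite (bigID (mem L)) /= -big_mkcondr; congr (_ + _).
    by apply: eq_bigl => u; rewrite andbC.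
  apply: eq_bigl => u; apply: andb_idl; rewrite far_out => out.
  by rewrite mem_inner_ball in vL; apply: leq_trans vL _; rewrite -(prednK r_gt0).
rewrite split outer; lra.
Qed.

Lemma cut_energy_ge i : (i < r)%N ->
  (edge_boundary nb o i)%:R^-1 * lam ^+ i * net_flow o ^+ 2 <=
  \sum_(e <- cut_edges i) energy e.1 e.2.
Proof.
move=> ir; have [cut0|cut_gt0] := posnP (edge_boundary nb o i).
  by rewrite cut0 invr0 !mul0r sumr_ge0 // => e _; apply: energy_ge0.
have flow_sqr : \sum_(e <- cut_edges i) flow e.1 e.2 ^+ 2 =
    (lam ^+ i)^-1 * \sum_(e <- cut_edges i) energy e.1 e.2.
  rewrite (big_cut_edges i (fun v u => flow v u ^+ 2)) big_cut_edges mulr_sumr.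
  apply: eq_big_seq => v.
  rewrite mem_ballseq mulr_sumr big_seq_cond [RHS]big_seq_cond => vi.
  apply: eq_bigr => u /andP [uv iu]; have dv := dist_cut_edge vi uv iu.
  by rewrite /flow /energy conductance_lt ?dv // exprVn; ring.
have := sqr_sum_le_size (cut_edges i) (fun e => flow e.1 e.2).
rewrite net_flow_through_cut // size_cut_edges flow_sqr.
have N_gt0 : 0 < (edge_boundary nb o i)%:R :> R by rewrite ltr0n.
have lam_i_gt0 : 0 < lam ^+ i by rewrite exprn_gt0 ?lam_gt0.
move: (edge_boundary _ _ _)%:R (lam ^+ i) N_gt0 lam_i_gt0 => N l N_gt0 l_gt0 cs.
rewrite -mulrA ler_pdivrMl //; apply: le_trans (ler_wpM2l (ltW l_gt0) cs) _.
by rewrite mulrCA [l * _]mulrA mulfV ?gt_eqF // mul1r.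
Qed.

Lemma escape_fun_root_le :
  (forall i, (i < r)%N -> (0 < edge_boundary nb o i)%N) ->
  escape_fun o <= (size (nb o))%:R^-1 *
    (\sum_(i < r) (edge_boundary nb o i)%:R^-1 * lam ^+ i)^-1.
Proof.
move=> cuts_gt0; set S := \sum_(i < r) _.
have S_gt0 : 0 < S.
  rewrite /S (bigD1 (Ordinal r_gt0)) //= expr0 mulr1 ltr_wpDr //.
    apply: sumr_ge0 => i _.
    by rewrite mulr_ge0 ?invr_ge0 ?ler0n ?exprn_ge0 ?ltW ?lam_gt0.
  by rewrite invr_gt0 ltr0n cuts_gt0.
have squared : S * net_flow o ^+ 2 <= net_flow o.
  apply: le_trans energy_le_net_flow; rewrite -sum_cut_levels mulr_suml.
  by apply: ler_sum => i _; apply: cut_energy_ge.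
have flow_le : net_flow o <= S^-1.
  have [I_le0|I_gt0] := lerP (net_flow o) 0.
    by rewrite (le_trans I_le0) // invr_ge0 ltW.
  rewrite -(ler_pM2l S_gt0) mulfV ?gt_eqF // -(ler_pM2r I_gt0) mul1r.
  by rewrite -mulrA -expr2.
by rewrite escape_fun_root ler_wpM2l // invr_ge0.
Qed.

End HomesickWalk.

Unset Implicit Arguments.

Theorem proposition4p1 (V : choiceType) (nb : V -> seq V) (o : V)
  (R : realType) (lam : R) (r : nat)
  (nb_uniq : forall x, uniq (nb x))
  (nb_irrefl : forall x, x \notin nb x)
  (nb_sym : forall x y, y \in nb x -> x \in nb y)
  (connected : forall v, exists s, path (adj nb) o s /\ last o s = v)
  (lam_ge1 : 1 <= lam) (r_ge1 : (1 <= r)%N) :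
  (escape_prob nb o lam r <=
   (if [exists i : 'I_r, edge_boundary nb o i == 0%N] then 0
    else ((size (nb o))%:R)^-1 *
         (\sum_(i < r) ((edge_boundary nb o i)%:R)^-1 * lam ^+ i)^-1)%:E)%E.
Proof.
case: ifP => [/existsP [i /eqP cut0] | /negbT /existsPn cuts_gt0].
  by rewrite (escape_prob_cut0 connected lam (ltn_ord i) cut0).
apply: le_trans (escape_prob_le_escape_fun o r nb_uniq lam_ge1) _.
rewrite lee_fin; apply: escape_fun_root_le => // i ir.
by rewrite lt0n; apply: cuts_gt0 (Ordinal ir).
Qed.
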